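(* Let $n\geq 2$ and let $A$ be a commutative associative algebra over $\mathbb{C}$ equipped with $n-1$ pairwise commuting derivations $D_1,\ldots,D_{n-1}$. Define the $n$-ary bracket $$W(u_1,\ldots,u_n)=\det\begin{pmatrix} u_1 & \cdots & u_n\\ D_1u_1 & \cdots & D_1u_n\\ \vdots & & \vdots\\ D_{n-1}u_1 & \cdots & D_{n-1}u_n\end{pmatrix}$$ for $u_1,\ldots,u_n\in A$ (the determinant being computed using the commutative associative product of $A$). Then $(A,\cdot,W(\cdot,\ldots,\cdot))$ is a strong transposed Poisson $n$-Lie algebra.
   Context: An $n$-Lie algebra is a vector space $L$ with an $n$-linear skew-symmetric bracket $[\cdot,\ldots,\cdot]$ satisfying $[[x_1,\ldots,x_n],y_2,\ldots,y_n]=\sum_{i=1}^n[x_1,\ldots,x_{i-1},[x_i,y_2,\ldots,y_n],x_{i+1},\ldots,x_n]$ for all $x_i,y_j\in L$. A transposed Poisson $n$-Lie algebra is a triple $(A,\cdot,[\cdot,\ldots,\cdot])$ where $(A,\cdot)$ is a commutative associative algebra, $(A,[\cdot,\ldots,\cdot])$ is an $n$-Lie algebra, and for all $h,a_1,\ldots,a_n\in A$: $n\,h\,[a_1,\ldots,a_n]=\sum_{i=1}^n[a_1,\ldots,h a_i,\ldots,a_n]$ (with $ha_i$ in the $i$-th slot). It is called strong if moreover for all $h,y_1,y_2,x_1,\ldots,x_{n-1}\in A$: $$y_1[hy_2,x_1,\ldots,x_{n-1}]-y_2[hy_1,x_1,\ldots,x_{n-1}]+\sum_{i=1}^{n-1}(-1)^{i-1}hx_i[y_1,y_2,x_1,\ldots,\hat{x}_i,\ldots,x_{n-1}]=0,$$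 where $\hat{x}_i$ means $x_i$ is omitted. *)

From HB Require Import structures.
From mathcomp Require Import all_boot all_order all_fingroup all_algebra.
From mathcomp Require Import complex.
From mathcomp Require Import Rstruct.
Set Implicit Arguments. Unset Strict Implicit. Unset Printing Implicit Defensive.
Import Order.TTheory GRing.Theory Num.Theory.
Local Open Scope ring_scope.

Notation Cplx := (complex Rdefinitions.R).

Section NLie.
Variables (F : comNzRingType) (A : comAlgType F) (n : nat).

Definition upd (u : 'I_n -> A) (i : 'I_n) (a : A) : 'I_n -> A :=
  fun k => if k == i then a else u k.

(* value of a family at a natural index (0 outside the range) *)
Definition natat (x : 'I_n -> A) (j : nat) : A :=
  if (insub j : option 'I_n) is Some k then x k else 0.

(* (a, y_1, ..., y_{n-1}) : slot 0 is a, slots 1..n-1 are taken from y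
   (slot 0 of y is ignored) *)
Definition cons0 (a : A) (y : 'I_n -> A) : 'I_n -> A :=
  fun k => if val k == 0%N then a else y k.

(* (y1, y2, x_1, ..., ^x_i, ..., x_{n-1}) with x_j stored at slot j of x *)
Definition omitarg (x : 'I_n -> A) (i : nat) (y1 y2 : A) : 'I_n -> A :=
  fun k => if val k == 0%N then y1 else if val k == 1%N then y2
           else if (val k <= i)%N then natat x (val k).-1 else natat x (val k).

Definition nlinear (br : ('I_n -> A) -> A) : Prop :=
  forall (u : 'I_n -> A) (i : 'I_n) (c : F) (a b : A),
    br (upd u i (c *: a + b)) = c *: br (upd u i a) + br (upd u i b).

Definition skew_symmetric (br : ('I_n -> A) -> A) : Prop :=
  forall (s : 'S_n) (u : 'I_n -> A),
    br (fun k => u (s k)) = (-1) ^+ (odd_perm s) * br u.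

Definition filippov (br : ('I_n -> A) -> A) : Prop :=
  forall x y : 'I_n -> A,
    br (cons0 (br x) y) = \sum_(i < n) br (upd x i (br (cons0 (x i) y))).

Definition is_nLie (br : ('I_n -> A) -> A) : Prop :=
  [/\ nlinear br, skew_symmetric br & filippov br].

(* (A, mul, br) is a transposed Poisson n-Lie algebra; (A, mul) is commutative
   associative by the structure of A. *)
Definition transposed_Poisson_nLie (br : ('I_n -> A) -> A) : Prop :=
  is_nLie br /\
  forall (h : A) (a : 'I_n -> A),
    n%:R * h * br a = \sum_(i < n) br (upd a i (h * a i)).

Definition strong_condition (br : ('I_n -> A) -> A) : Prop :=
  forall (h y1 y2 : A) (x : 'I_n -> A),
    y1 * br (cons0 (h * y2) x) - y2 * br (cons0 (h * y1) x)
    + \sum_(i < n | (1 <= val i)%N)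
        (-1) ^+ (val i).-1 * h * x i * br (omitarg x (val i) y1 y2) = 0.

Definition strong_transposed_Poisson_nLie (br : ('I_n -> A) -> A) : Prop :=
  transposed_Poisson_nLie br /\ strong_condition br.

Definition derivation (d : A -> A) : Prop :=
  (forall (c : F) (a b : A), d (c *: a + b) = c *: d a + d b) /\
  (forall a b : A, d (a * b) = d a * b + a * d b).

(* row i (i >= 1) of the Wronskian matrix uses D_i, stored as D (i-1) *)
Definition Drow (D : 'I_n.-1 -> A -> A) (i : nat) (a : A) : A :=
  if (insub i.-1 : option 'I_n.-1) is Some k then D k a else 0.

Definition wronskian_bracket (D : 'I_n.-1 -> A -> A) (u : 'I_n -> A) : A :=
  \det (\matrix_(i < n, j < n) (if val i == 0%N then u j else Drow D (val i) (u j))).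

End NLie.

From HB Require Import structures.
From mathcomp Require Import all_boot all_order all_fingroup all_algebra.
From mathcomp Require Import complex Rstruct.
From mathcomp Require Import ring.
Import GRing.Theory.
Local Open Scope ring_scope.
Set Implicit Arguments. Unset Strict Implicit. Unset Printing Implicit Defensive.

(* Put delta_0 = id and delta_r = D_r for 1 <= r <= n-1, so that
   W(u) = det (delta_r u_j). Expanding along the first column, the map
   u |-> W(u, y_2, ..., y_n) is the first-order operator
   phi = sum_r g_r delta_r whose coefficients g_r are the first-column
   cofactors. For every operator of this form the Leibniz rule and the
   commutation of the D_r give
     sum_i W(x_1, ..., phi x_i, ..., x_n)
       = phi (W x) + ((n-1) g_0 + sum_(r>=1) D_r g_r) W x.
   With g = (h, 0, ..., 0) this is the transposed Poisson identity. For the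
   cofactors, sum_(r>=1) D_r g_r = -(n-1) g_0: in the expansion of D_r g_r
   the second derivatives D_r D_s cancel in pairs, being symmetric in (r, s)
   while the accompanying minors are antisymmetric, and what remains is -g_0
   for each r; this gives the Filippov identity. Finally the Leibniz rule
   pulls h out of the strong condition, which is then the expansion along
   the first row of an (n+1) x (n+1) determinant whose first two rows both
   equal (y_1, y_2, x_1, ..., x_(n-1)). *)

Section SetColumn.
Variables (R : comPzRingType) (n : nat).
Implicit Types (M : 'M[R]_n) (i j r : 'I_n) (u v : 'I_n -> R).

Definition set_col M j v : 'M[R]_n :=
  \matrix_(r, c) if c == j then v r else M r c.

Definition delta_col r : 'I_n -> R := fun t => (t == r)%:R.

Lemma det_set_col M j v : \det (set_col M j v) = \sum_r v r * cofactor M r j.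
Proof.
rewrite (expand_det_col _ j); apply: eq_bigr => r _; rewrite mxE eqxx.
congr (_ * (_ * \det _)); apply/matrixP => k l; rewrite !mxE.
by rewrite eq_sym eq_liftF.
Qed.

Lemma cofactor_set_col M r j : cofactor M r j = \det (set_col M j (delta_col r)).
Proof.
rewrite det_set_col (bigD1 r) //= big1 => [|t /negbTE tr].
  by rewrite /delta_col eqxx mul1r addr0.
by rewrite /delta_col tr mul0r.
Qed.

Lemma set_col_id M j : set_col M j (fun r => M r j) = M.
Proof. by apply/matrixP => r c; rewrite mxE; case: eqP => [->|]. Qed.

Lemma set_colC M i j u v : i != j ->
  set_col (set_col M j u) i v = set_col (set_col M i v) j u.
Proof.
move=> ij; apply/matrixP => r c; rewrite !mxE.
by case: (eqVneq c i) => [->|//]; rewrite (negbTE ij).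
Qed.

Lemma det_set_col_swap M i j u v : i != j ->
  \det (set_col (set_col M j u) i v) = - \det (set_col (set_col M j v) i u).
Proof.
move=> ij; have det_xcol (N : 'M[R]_n) : \det (xcol i j N) = - \det N.
  by rewrite xcolE det_mulmx det_perm odd_tperm ij expr1 mulrN1.
rewrite -det_xcol; congr (\det _); apply/matrixP => r c; rewrite !mxE.
case: tpermP => [->|->|/eqP ci /eqP cj]; rewrite ?eqxx ?(negbTE ci) ?(negbTE cj) //.
all: by rewrite eq_sym (negbTE ij).
Qed.

Lemma det_set_col_eq0 M i j v : i != j -> \det (set_col (set_col M j v) i v) = 0.
Proof.
move=> ij; rewrite -det_tr; apply: (determinant_alternate ij) => r.
by rewrite !mxE !eqxx eq_sym (negbTE ij).
Qed.

Lemma sum_mul_cofactor M k r :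
  \sum_c M k c * cofactor M r c = \det M *+ (k == r).
Proof.
have := congr1 (fun N : 'M[R]_n => N k r) (mul_mx_adj M).
by rewrite !mxE => <-; apply: eq_bigr => c _; rewrite mxE.
Qed.

Lemma sum_expand_det_col M : \sum_c \sum_r M r c * cofactor M r c = \det M *+ n.
Proof.
rewrite (eq_bigr (fun _ => \det M)) ?sumr_const ?card_ord // => c _.
by rewrite -expand_det_col.
Qed.

End SetColumn.

Arguments delta_col {R n}.

Lemma alternating_sum_eq0 (V : zmodType) k (G : 'I_k -> 'I_k -> V) :
  (forall i j, G j i = - G i j) -> (forall i, G i i = 0) ->
  \sum_i \sum_j G i j = 0.
Proof.
move=> G_anti G_diag.
have split_diag i :
    \sum_j G i j = \sum_(j < k | (j < i)%N) G i j + \sum_(j < k | (i < j)%N) G i j.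
  rewrite (bigID (fun j : 'I_k => (j < i)%N)) /=; congr (_ + _).
  rewrite (bigD1 i) ?ltnn //= G_diag add0r; apply: eq_bigl => j.
  by rewrite -leqNgt andbC ltn_neqAle eq_sym val_eqE.
rewrite (eq_bigr _ (fun i _ => split_diag i)) big_split /=.
rewrite (exchange_big_dep predT) //=.
under eq_bigr do under eq_bigr do rewrite G_anti.
by under eq_bigr do rewrite sumrN; rewrite sumrN addNr.
Qed.

Section Derivation.
Variables (R : comPzRingType) (d : R -> R).
Hypothesis derD : forall a b, d (a + b) = d a + d b.
Hypothesis derM : forall a b, d (a * b) = d a * b + a * d b.

Lemma der0 : d 0 = 0.
Proof. by apply: (addrI (d 0)); rewrite -derD !addr0. Qed.

Lemma derN a : d (- a) = - d a.
Proof. by apply/eqP; rewrite -addr_eq0 -derD addNr der0. Qed.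

Lemma der_sum I (s : seq I) (P : pred I) (G : I -> R) :
  d (\sum_(i <- s | P i) G i) = \sum_(i <- s | P i) d (G i).
Proof. exact: (big_morph d derD der0). Qed.

Lemma der1 : d 1 = 0.
Proof.
by apply: (addrI (d 1)); rewrite addr0; have := derM 1 1; rewrite !(mulr1, mul1r) => <-.
Qed.

Lemma der_natr k : d k%:R = 0.
Proof. by elim: k => [|k IH]; [exact: der0 | rewrite mulrS derD der1 IH addr0]. Qed.

Lemma der_sign k : d ((-1) ^+ k) = 0.
Proof.
elim: k => [|k IH]; first by rewrite expr0 der1.
by rewrite exprS derM IH mulr0 addr0 derN der1 oppr0 mul0r.
Qed.

Lemma der_prod k (G : 'I_k -> R) :
  d (\prod_i G i) = \sum_j \prod_i (if i == j then d (G i) else G i).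
Proof.
elim: k G => [|k IH] G; first by rewrite big_ord0 der1 big_ord0.
rewrite big_ord_recr /= derM IH big_ord_recr /= mulr_suml; congr (_ + _).
  apply: eq_bigr => j _; rewrite big_ord_recr /=.
  have -> : (ord_max == widen_ord (leqnSn k) j) = false.
    by apply/negbTE; rewrite neq_ltn /= ltn_ord orbT.
  congr (_ * _); apply: eq_bigr => i _.
rewrite big_ord_recr /= eqxx; congr (_ * _); apply: eq_bigr => i _.
by rewrite -val_eqE /= (ltn_eqF (ltn_ord i)).
Qed.

Lemma der_det n (M : 'M[R]_n) :
  d (\det M) = \sum_r \sum_c d (M r c) * cofactor M r c.
Proof.
pose Mr r := \matrix_(i, c) if i == r then d (M i c) else M i c.
transitivity (\sum_r \det (Mr r)); last first.
  apply: eq_bigr => r _; rewrite (expand_det_row _ r); apply: eq_bigr => c _.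
  rewrite mxE eqxx; congr (_ * (_ * \det _)); apply/matrixP => k l.
  by rewrite !mxE eq_sym eq_liftF.
rewrite /(\det M) der_sum.
under eq_bigr do rewrite derM der_sign mul0r add0r der_prod mulr_sumr.
rewrite exchange_big /=; apply: eq_bigr => r _; apply: eq_bigr => s _.
by congr (_ * _); apply: eq_bigr => i _; rewrite mxE.
Qed.

End Derivation.

Section Wronskian.
Variables (F : comNzRingType) (A : comAlgType F) (m : nat) (D : 'I_m.+1 -> A -> A).
Hypothesis D_der : forall k, derivation (D k).
Hypothesis D_comm : forall k l a, D k (D l a) = D l (D k a).
Local Notation n := m.+2.
Local Notation W := (wronskian_bracket (n:=n) D).

Lemma D_add k a b : D k (a + b) = D k a + D k b.
Proof. by case: (D_der k) => D_lin _; have := D_lin 1 a b; rewrite !scale1r. Qed.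

Lemma D_mul k a b : D k (a * b) = D k a * b + a * D k b.
Proof. by case: (D_der k). Qed.

Definition wdiff (r : 'I_n) : A -> A :=
  if unlift ord0 r is Some k then D k else id.

Definition wder (r : 'I_n) : A -> A :=
  if unlift ord0 r is Some k then D k else fun=> 0.

Definition wmx (u : 'I_n -> A) : 'M[A]_n := \matrix_(r, j) wdiff r (u j).

Lemma wdiff0 a : wdiff ord0 a = a.
Proof. by rewrite /wdiff unlift_none. Qed.

Lemma wdiff_lift k a : wdiff (lift ord0 k) a = D k a.
Proof. by rewrite /wdiff liftK. Qed.

Lemma wder0 a : wder ord0 a = 0.
Proof. by rewrite /wder unlift_none. Qed.

Lemma wder_lift k a : wder (lift ord0 k) a = D k a.
Proof. by rewrite /wder liftK. Qed.

Lemma wronskian_bracketE u : W u = \det (wmx u).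
Proof.
congr (\det _); apply/matrixP => r j; rewrite !mxE.
case: (unliftP ord0 r) => [k ->|->]; last by rewrite wdiff0.
by rewrite wdiff_lift /Drow /= valK.
Qed.

Lemma eq_wronskian u v : u =1 v -> W u = W v.
Proof.
move=> uv; rewrite !wronskian_bracketE; congr (\det _).
by apply/matrixP => r j; rewrite !mxE uv.
Qed.

Lemma wdiff_linear r c a b : wdiff r (c *: a + b) = c *: wdiff r a + wdiff r b.
Proof.
case: (unliftP ord0 r) => [k ->|->]; last by rewrite !wdiff0.
by rewrite !wdiff_lift; case: (D_der k).
Qed.

Lemma wdiffD r a b : wdiff r (a + b) = wdiff r a + wdiff r b.
Proof. by have := wdiff_linear r 1 a b; rewrite !scale1r. Qed.

Lemma wderD r a b : wder r (a + b) = wder r a + wder r b.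
Proof.
case: (unliftP ord0 r) => [k ->|->]; last by rewrite !wder0 addr0.
by rewrite !wder_lift D_add.
Qed.

Lemma wdiffM r a b : wdiff r (a * b) = a * wdiff r b + wder r a * b.
Proof.
case: (unliftP ord0 r) => [k ->|->]; last by rewrite !wdiff0 wder0 mul0r addr0.
by rewrite !wdiff_lift wder_lift D_mul addrC.
Qed.

Lemma wdiffC r s a : wdiff r (wdiff s a) = wdiff s (wdiff r a).
Proof.
case: (unliftP ord0 r) => [k ->|->]; last by rewrite !wdiff0.
case: (unliftP ord0 s) => [l ->|->]; last by rewrite !wdiff0.
by rewrite !wdiff_lift D_comm.
Qed.

Lemma wmx_upd u i v : wmx (upd u i v) = set_col (wmx u) i (fun r => wdiff r v).
Proof. by apply/matrixP => r c; rewrite !mxE /upd; case: eqP. Qed.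

Lemma wronskian_nlinear : nlinear W.
Proof.
move=> u i c a b; rewrite !wronskian_bracketE !wmx_upd !det_set_col.
rewrite scaler_sumr -big_split /=; apply: eq_bigr => r _.
by rewrite wdiff_linear mulrDl scalerAl.
Qed.

Lemma wronskian_skew : skew_symmetric W.
Proof.
move=> s u; rewrite !wronskian_bracketE.
have -> : wmx (fun k => u (s k)) = col_perm s (wmx u).
  by apply/matrixP => r c; rewrite !mxE.
by rewrite col_permE det_mulmx det_perm odd_permV mulrC.
Qed.

Lemma sum_wdiff_cofactor (M : 'M[A]_n) r :
  \sum_s \sum_i wdiff r (M s i) * cofactor M s i
  = wdiff r (\det M) + (if r == ord0 then \det M *+ m.+1 else 0).
Proof.
case: (unliftP ord0 r) => [k ->|->].
  rewrite eq_sym eq_liftF addr0 wdiff_lift (der_det (D_add k) (D_mul k)).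
  by under eq_bigr do under eq_bigr do rewrite wdiff_lift.
under eq_bigr do under eq_bigr do rewrite wdiff0.
by rewrite wdiff0 eqxx exchange_big sum_expand_det_col mulrS.
Qed.

Lemma sum_wronskian_upd_diffop (g : 'I_n -> A) x :
  \sum_i W (upd x i (\sum_r g r * wdiff r (x i)))
  = \sum_r g r * wdiff r (W x) + (g ord0 *+ m.+1 + \sum_r wder r (g r)) * W x.
Proof.
rewrite wronskian_bracketE; set M := wmx x.
under eq_bigr do rewrite wronskian_bracketE wmx_upd det_set_col.
have term i s : wdiff s (\sum_r g r * wdiff r (x i)) * cofactor M s i
    = \sum_r (g r * (wdiff r (M s i) * cofactor M s i)
              + wder s (g r) * (M r i * cofactor M s i)).
  rewrite (der_sum (wdiffD s)) mulr_suml; apply: eq_bigr => r _.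
  by rewrite wdiffM !mxE wdiffC; ring.
under eq_bigr do under eq_bigr do rewrite term big_split /=.
under eq_bigr do rewrite big_split /=.
rewrite big_split /=.
have -> : \sum_i \sum_s \sum_r g r * (wdiff r (M s i) * cofactor M s i)
    = \sum_r g r * wdiff r (\det M) + g ord0 * \det M *+ m.+1.
  rewrite exchange_big /=; under eq_bigr do rewrite exchange_big /=.
  rewrite exchange_big /=.
  transitivity (\sum_r g r * (wdiff r (\det M) + (if r == ord0 then \det M *+ m.+1 else 0))).
    apply: eq_bigr => r _; rewrite -sum_wdiff_cofactor mulr_sumr.
    by apply: eq_bigr => s _; rewrite mulr_sumr.
  rewrite (eq_bigr _ (fun r _ => mulrDr _ _ _)) big_split /=; congr (_ + _).
  rewrite big_ord_recl eqxx mulrnAr big1 ?addr0 // => r _.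
  by rewrite eq_sym eq_liftF mulr0.
have -> : \sum_i \sum_s \sum_r wder s (g r) * (M r i * cofactor M s i)
    = (\sum_r wder r (g r)) * \det M.
  rewrite exchange_big /=; under eq_bigr do rewrite exchange_big /=.
  rewrite mulr_suml; apply: eq_bigr => s _.
  under eq_bigr do rewrite -mulr_sumr sum_mul_cofactor.
  rewrite (bigD1 s) //= eqxx mulr1n big1 ?addr0 // => r /negbTE ->.
  by rewrite mulr0n mulr0.
by rewrite mulrDl mulrnAl addrA.
Qed.

Lemma wronskian_transposed_Poisson h x :
  n%:R * h * W x = \sum_i W (upd x i (h * x i)).
Proof.
pose g (r : 'I_n) : A := if r == ord0 then h else 0.
have gE u : \sum_r g r * wdiff r u = h * u.
  rewrite big_ord_recl /g eqxx wdiff0 big1 ?addr0 // => r _.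
  by rewrite eq_sym eq_liftF mul0r.
under eq_bigr do rewrite -gE.
rewrite sum_wronskian_upd_diffop gE big1 => [|r _]; last first.
  by rewrite /g; case: eqP => [->|_]; rewrite ?wder0 ?(der0 (wderD r)).
by rewrite addr0 mulr_natl mulrS mulrDl.
Qed.

Lemma wronskian_cons0 y u :
  W (cons0 u y) = \sum_r cofactor (wmx (cons0 0 y)) r ord0 * wdiff r u.
Proof.
rewrite wronskian_bracketE.
have -> : wmx (cons0 u y) = set_col (wmx (cons0 0 y)) ord0 (fun r => wdiff r u).
  apply/matrixP => r c; rewrite !mxE /cons0.
  by case: (unliftP ord0 c) => [c' ->|->]; rewrite ?eqxx // eq_sym eq_liftF.
by rewrite det_set_col; apply: eq_bigr => r _; rewrite mulrC.
Qed.

Section Divergence.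
Variable y : 'I_n -> A.
Let Y := wmx (cons0 0 y).
Let g r := cofactor Y r ord0.
Let Q (r j c : 'I_n) := \det (set_col (set_col Y ord0 (delta_col r)) c (delta_col j)).

Lemma Y_lift r c : Y r (lift ord0 c) = wdiff r (y (lift ord0 c)).
Proof. by rewrite mxE. Qed.

Lemma wder_cofactor r :
  wder r (g r) = \sum_j \sum_(c < m.+1) wder r (Y j (lift ord0 c)) * Q r j (lift ord0 c).
Proof.
case: (unliftP ord0 r) => [k ->|->]; last first.
  by rewrite wder0 big1 // => j _; rewrite big1 // => c _; rewrite wder0 mul0r.
rewrite wder_lift /g cofactor_set_col (der_det (D_add k) (D_mul k)).
apply: eq_bigr => j _; rewrite big_ord_recl mxE eqxx (der_natr (D_add k) (D_mul k)).
rewrite mul0r add0r; apply: eq_bigr => c _.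
by rewrite mxE eq_sym eq_liftF wder_lift /Q -cofactor_set_col.
Qed.

Lemma sum_col_Q c : c != ord0 -> \sum_r Y r c * Q r ord0 c = - g ord0.
Proof.
move=> c0; transitivity (\sum_r Y r c * cofactor (set_col Y c (delta_col ord0)) r ord0).
  by apply: eq_bigr => r _; rewrite /Q set_colC // -cofactor_set_col.
rewrite -det_set_col det_set_col_swap; last by rewrite eq_sym.
by rewrite set_col_id /g cofactor_set_col.
Qed.

Lemma sum_wder_col c :
  \sum_r \sum_j wder r (Y j (lift ord0 c)) * Q r j (lift ord0 c) = - g ord0.
Proof.
set c0 := lift ord0 c; have c0_neq0 : c0 != ord0 by rewrite eq_sym eq_liftF.
have Q_swap r j : Q r j c0 = - Q j r c0 by rewrite /Q det_set_col_swap.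
have Q_diag r : Q r r c0 = 0 by rewrite /Q det_set_col_eq0.
rewrite big_ord_recl big1 ?add0r => [|j _]; last by rewrite wder0 mul0r.
under eq_bigr do rewrite big_ord_recl wder_lift.
rewrite big_split /= [X in _ + X]alternating_sum_eq0 ?addr0 => [|k l|k]; first last.
- by rewrite !wder_lift Y_lift !wdiff_lift Q_diag mulr0.
- by rewrite !wder_lift !Y_lift !wdiff_lift D_comm Q_swap mulrN.
rewrite -(sum_col_Q c0_neq0) [RHS]big_ord_recl Q_diag mulr0 add0r.
by apply: eq_bigr => k _; rewrite !Y_lift wdiff0 wdiff_lift.
Qed.

Lemma wronskian_cofactor_divergence : \sum_r wder r (g r) = - (g ord0 *+ m.+1).
Proof.
under eq_bigr do rewrite wder_cofactor exchange_big /=.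
rewrite exchange_big /=; under eq_bigr do rewrite sum_wder_col.
by rewrite sumr_const card_ord mulNrn.
Qed.

End Divergence.

Lemma wronskian_filippov : filippov W.
Proof.
move=> x y; under eq_bigr do rewrite wronskian_cons0; rewrite wronskian_cons0.
rewrite (sum_wronskian_upd_diffop (fun r => cofactor (wmx (cons0 0 y)) r ord0)).
by rewrite wronskian_cofactor_divergence subrr mul0r addr0.
Qed.

Lemma wronskian_cons0_mul h y1 y2 x :
  y1 * W (cons0 (h * y2) x) - y2 * W (cons0 (h * y1) x)
  = h * (y1 * W (cons0 y2 x) - y2 * W (cons0 y1 x)).
Proof.
rewrite !wronskian_cons0 !mulr_sumr -!sumrB mulr_sumr; apply: eq_bigr => r _.
by rewrite !wdiffM; ring.
Qed.

Lemma wronskian_laplace (z : 'I_n.+1 -> A) :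
  \sum_(c < n.+1) (-1) ^+ c * z c * W (fun l => z (lift c l)) = 0.
Proof.
pose B := \matrix_(r < n.+1, c < n.+1)
  if unlift ord0 r is Some r' then wdiff r' (z c) else z c.
have B_det0 : \det B = 0.
  apply: (determinant_alternate (neq_lift ord0 ord0)) => c.
  by rewrite !mxE unlift_none liftK wdiff0.
transitivity (\det B) => //; rewrite (expand_det_row _ ord0); apply: eq_bigr => c _.
rewrite /cofactor mxE unlift_none add0n wronskian_bracketE.
have -> : row' ord0 (col' c B) = wmx (fun l => z (lift c l)).
  by apply/matrixP => r l; rewrite !mxE liftK.
by rewrite mulrCA mulrA.
Qed.

Definition cons2 (y1 y2 : A) (x : 'I_n -> A) (c : 'I_n.+1) : A :=
  match val c with 0 => y1 | 1 => y2 | j.+2 => natat x j.+1 end.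

Lemma natat_ord (x : 'I_n -> A) (k : 'I_n) : natat x k = x k.
Proof.
rewrite /natat; case: insubP => [k' _ /val_inj -> //|].
by rewrite ltn_ord.
Qed.

Lemma cons2_lift0 y1 y2 x l : cons2 y1 y2 x (lift ord0 l) = cons0 y2 x l.
Proof. by case: l => [[|l] hl]; rewrite /cons2 /cons0 //= -(natat_ord x (Ordinal hl)). Qed.

Lemma cons2_lift1 y1 y2 x l :
  cons2 y1 y2 x (lift (lift ord0 ord0) l) = cons0 y1 x l.
Proof. by case: l => [[|l] hl]; rewrite /cons2 /cons0 //= -(natat_ord x (Ordinal hl)). Qed.

Lemma cons2_lift2 y1 y2 x i :
  cons2 y1 y2 x (lift ord0 (lift ord0 i)) = x (lift ord0 i).
Proof. by rewrite -natat_ord. Qed.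

Lemma cons2_lift_omit y1 y2 x (i : 'I_m.+1) l :
  cons2 y1 y2 x (lift (lift ord0 (lift ord0 i)) l) = omitarg x (lift ord0 i) y1 y2 l.
Proof.
case: l => [[|[|l]] hl]; rewrite /cons2 /omitarg //= /bump !ltnS.
by case: leqP.
Qed.

Lemma wronskian_strong_identity y1 y2 x :
  y1 * W (cons0 y2 x) - y2 * W (cons0 y1 x)
  + \sum_(i < n | (1 <= val i)%N) (-1) ^+ (val i).-1 * x i * W (omitarg x (val i) y1 y2)
  = 0.
Proof.
apply: etrans (wronskian_laplace (cons2 y1 y2 x)).
rewrite [RHS]big_ord_recl [in RHS]big_ord_recl addrA.
rewrite big_mkcond [in LHS]big_ord_recl /= add0r; congr (_ + _ + _).
- by rewrite expr0 mul1r (eq_wronskian (cons2_lift0 y1 y2 x)).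
- by rewrite expr1 mulN1r mulNr (eq_wronskian (cons2_lift1 y1 y2 x)).
apply: eq_bigr => i _; rewrite cons2_lift2 (eq_wronskian (cons2_lift_omit y1 y2 x i)).
by rewrite !lift0 /= !exprS !mulN1r opprK.
Qed.

Lemma wronskian_strong : strong_condition W.
Proof.
move=> h y1 y2 x; rewrite wronskian_cons0_mul.
have -> : \sum_(i < n | (1 <= val i)%N)
      (-1) ^+ (val i).-1 * h * x i * W (omitarg x (val i) y1 y2)
    = h * \sum_(i < n | (1 <= val i)%N)
      (-1) ^+ (val i).-1 * x i * W (omitarg x (val i) y1 y2).
  by rewrite mulr_sumr; apply: eq_bigr => i _; rewrite !mulrA [_ * h]mulrC.
by rewrite -mulrDr wronskian_strong_identity mulr0.
Qed.

End Wronskian.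

Unset Implicit Arguments.

Theorem mainTheorem2 (n : nat) (hn : (2 <= n)%N) (A : comAlgType Cplx)
  (D : 'I_n.-1 -> A -> A)
  (hder : forall i, derivation (D i))
  (hcomm : forall (i j : 'I_n.-1) (a : A), D i (D j a) = D j (D i a)) :
  strong_transposed_Poisson_nLie (wronskian_bracket D).
Proof.
case: n hn D hder hcomm => [|[|m]] // _ D hder hcomm.
split; [split; [split|] |].
- exact: wronskian_nlinear hder.
- exact: wronskian_skew.
- exact: wronskian_filippov hder hcomm.
- exact: wronskian_transposed_Poisson hder hcomm.
- exact: wronskian_strong hder.
Qed.
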